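(* There is an absolute constant $C$ such that the following holds: if $\Gamma_\mathcal{D}$ is the incidence graph of an $\mathrm{STD}_\lambda[k;g]$ (with $\lambda\ge1$, $g\ge2$), having $n=2\lambda g^2$ vertices, then $\mu(\Gamma_\mathcal{D})\le C\sqrt{n}\log n$; that is, $\mu(\Gamma_\mathcal{D})=O(\sqrt{n}\log n)$.
   Context: A transversal design $\mathrm{TD}_\lambda[k;g]$ ($g\ge2$) is a triple $(X,\mathcal{G},\mathcal{B})$ where $X$ is a set of $kg$ points, $\mathcal{G}$ is a partition of $X$ into $k$ point classes of size $g$, and $\mathcal{B}$ is a family of $k$-subsets of $X$ (blocks) such that each block contains exactly one point of each point class and any two points from distinct point classes lie in exactly $\lambda$ blocks. It is symmetric (an $\mathrm{STD}_\lambda[k;g]$) if its dual (interchanging points and blocks) is also a $\mathrm{TD}_\lambda[k;g]$; then $k=\lambda g$ and $|X|=|\mathcal{B}|=\lambda g^2$. The incidence graph is the bipartite graph on $X\cup\mathcal{B}$ with $x$ adjacent to $B$ iff $x\in B$. A resolving set of a connected graph is a set $S$ of vertices such that for any two distinct vertices $u,w$ some $s\in S$ has $d(u,s)\neq d(w,s)$; the metric dimension $\mu(\Gamma)$ is the minimum size of a resolving set. *)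

From mathcomp Require Import all_boot.

(* Points form the finType X, blocks the finType Bk (so repeated blocks are
   allowed: a "family"), incidence is inc x b. *)
Definition is_TD (X Bk : finType) (inc : X -> Bk -> bool)
    (lam k g : nat) (pc : X -> 'I_k) : Prop :=
  [/\ (2 <= g)%N,
      forall i : 'I_k, #|[set x | pc x == i]| = g,
      forall (b : Bk) (i : 'I_k), #|[set x | (pc x == i) && inc x b]| = 1 &
      forall x y : X, pc x != pc y -> #|[set b | inc x b && inc y b]| = lam].

Definition is_STD (X Bk : finType) (inc : X -> Bk -> bool)
    (lam k g : nat) (pc : X -> 'I_k) (bc : Bk -> 'I_k) : Prop :=
  is_TD X Bk inc lam k g pc /\ is_TD Bk X (fun b x => inc x b) lam k g bc.

Definition incidence_adj (X Bk : finType) (inc : X -> Bk -> bool) : rel (X + Bk) :=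
  fun u v => match u, v with
             | inl x, inr b => inc x b
             | inr b, inl x => inc x b
             | _, _ => false
             end.

Section Metric.
Variable V : finType.
Variable adj : rel V.

Fixpoint ball (m : nat) (u : V) : {set V} :=
  match m with
  | 0 => [set u]
  | m'.+1 => ball m' u :|: [set v | [exists w in ball m' u, adj w v]]
  end.

(* graph distance: least m with v in ball m u (for a connected graph this is
   the usual distance, always < #|V|); #|V| if unreachable. *)
Definition gdist (u v : V) : nat :=
  find (fun m => v \in ball m u) (iota 0 #|V|).

Definition resolving (S : {set V}) : Prop :=
  forall u w : V, u != w -> exists2 s, s \in S & gdist u s != gdist w s.

Definition resolvingb (S : {set V}) : bool :=
  [forall u, forall w, (u != w) ==> [exists s in S, gdist u s != gdist w s]].

(* metric dimension: minimum cardinality of a resolving set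
   ([set: V] is always resolving, so the arg min is well defined). *)
Definition metric_dim : nat :=
  #|[arg min_(S < [set: V] | resolvingb S) #|S|]|.
End Metric.

From mathcomp Require Import all_boot.
From Stdlib Require Import Reals.
From mathcomp Require Import zify.
From Stdlib Require Import Lra.

(* In an STD_lam[k;g] with k >= 2 we have k = lam g, and every vertex of the
   incidence graph lies within distance 5 of every other one. The graph is
   bipartite, so the parity of the distance to a fixed point already tells
   points from blocks. A block containing exactly one of two points x, y is at
   distance 1 from one and at least 3 from the other; counting blocks through x
   or y shows that at least k of the k g blocks do so. Choosing g blocks greedily
   therefore halves the number of unresolved pairs of points, so
   O(g log (lam g^2)) blocks resolve all of them, and dually for blocks.
   Since g <= sqrt n this is O(sqrt n log n). *)

Set Implicit Arguments.
Unset Strict Implicit.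
Unset Printing Implicit Defensive.

(* [Reals] rebinds [^] on [nat] to [Nat.pow]; the combinatorics uses ssrnat's [expn]. *)
Import ssrnat.

Arguments ball {V}.
Arguments gdist {V}.
Arguments resolving {V}.
Arguments resolvingb {V}.

Lemma double_count (T I : finType) (A : {set T}) (B : {set I}) (r : T -> I -> bool) :
  \sum_(t in A) #|[set p in B | r t p]| = \sum_(p in B) #|[set t in A | r t p]|.
Proof.
transitivity (\sum_(t in A) \sum_(p in B) (r t p : nat)).
  by apply: eq_bigr => t _; rewrite -sum1dep_card big_mkcondr.
rewrite exchange_big; apply: eq_bigr => p _.
by rewrite -sum1dep_card [RHS]big_mkcondr.
Qed.

Lemma card_fibers (T : finType) k (f : T -> 'I_k) (P : pred T) c :
  (forall i, #|[set t | (f t == i) && P t]| = c) -> #|[set t | P t]| = k * c.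
Proof.
move=> fiber; rewrite -sum1dep_card (partition_big f xpredT) //=.
rewrite (eq_bigr (fun _ => c)) ?sum_nat_const ?card_ord // => i _.
by rewrite -(fiber i) -sum1dep_card; apply: eq_bigl => t; rewrite andbC.
Qed.

Section SeparatingSets.
Variables (T I : finType) (sep : T -> I -> bool).

Definition unseparated (P : {set I}) (S : {set T}) : {set I} :=
  [set p in P | [forall t in S, ~~ sep t p]].

Lemma unseparated_sub P S : unseparated P S \subset P.
Proof. by apply/subsetP => p; rewrite inE => /andP []. Qed.

Lemma unseparated0 P : unseparated P set0 = P.
Proof.
by apply/setP => p; rewrite inE; case: (p \in P) => //=; apply/forall_inP => t; rewrite inE.
Qed.

Lemma unseparatedU P S1 S2 :
  unseparated P (S1 :|: S2) = unseparated (unseparated P S1) S2.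
Proof.
apply/setP => p; rewrite !inE -andbA; congr (_ && _).
apply/forall_inP/andP => [sepU | [/forall_inP sep1 /forall_inP sep2] t].
  by split; apply/forall_inP => t St; apply: sepU; rewrite inE St ?orbT.
by rewrite inE => /orP [/sep1 | /sep2].
Qed.

Lemma unseparated1 P t : unseparated P [set t] = [set p in P | ~~ sep t p].
Proof.
apply/setP => p; rewrite !inE; congr (_ && _).
by apply/forall_inP/idP => [-> // | ? t' /set1P ->]; rewrite ?inE.
Qed.

Lemma unseparatedPn (P : {set I}) (S : {set T}) p :
  p \in P -> p \notin unseparated P S -> exists2 t, t \in S & sep t p.
Proof.
by move=> Pp; rewrite inE Pp /= negb_forall_in => /exists_inP [t St /negPn]; exists t.
Qed.

Variable g : nat.
Hypothesis T_gt0 : 0 < #|T|.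
Hypothesis g_gt0 : 0 < g.
Variable D : {set I}.
Hypothesis dense : {in D, forall p, #|T| <= g * #|[set t | sep t p]|}.

Lemma exists_good_separator (R : {set I}) :
  R \subset D -> exists t, #|R| <= g * #|[set p in R | sep t p]|.
Proof.
move=> RD; pose f t := #|[set p in R | sep t p]|.
have [t fmax] := eq_bigmax f T_gt0; exists t.
rewrite -(leq_pmul2r T_gt0) -mulnA [f t * _]mulnC.
have sum_f : \sum_(t0 : T) f t0 = \sum_(p in R) #|[set t0 | sep t0 p]|.
  rewrite (eq_bigl (fun t0 => t0 \in [set: T])); last by move=> t0; rewrite inE.
  rewrite double_count; apply: eq_bigr => p _; apply: eq_card => t0; by rewrite !inE.
apply: (@leq_trans (g * \sum_(t0 : T) f t0)); last first.
  apply: leq_mul => //; rewrite -fmax -sum_nat_const.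
  by apply: leq_sum => t0 _; apply: leq_bigmax.
rewrite sum_f big_distrr /= -sum_nat_const leq_sum // => p Rp.
by rewrite dense // (subsetP RD).
Qed.

Lemma greedy_step (P : {set I}) (S : {set T}) : P \subset D -> exists t,
  #|unseparated P S| <= g * (#|unseparated P S| - #|unseparated P (S :|: [set t])|).
Proof.
move=> PD; have [t good] := exists_good_separator (subset_trans (unseparated_sub P S) PD).
exists t; rewrite unseparatedU unseparated1; move: good; set R := unseparated P S.
suff {3}<- : #|[set p in R | sep t p]| + #|[set p in R | ~~ sep t p]| = #|R| by rewrite addnK.
rewrite -(cardsID [set p | sep t p] R).
by congr (_ + _); apply: eq_card => p; rewrite !inE andbC.
Qed.

Lemma halving_set (P : {set I}) : P \subset D ->
  exists S : {set T}, #|S| <= g /\ 2 * #|unseparated P S| <= #|P|.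
Proof.
move=> PD.
(* Each greedy step removes a 1/g fraction of what is still unseparated, hence
   at least |P|/(2g) elements as long as more than half of P is unseparated. *)
have invariant j : j <= g -> exists S : {set T},
    #|S| <= j /\ 2 * g * #|unseparated P S| <= (2 * g - j) * #|P|.
  elim: j => [_ | j IHj lt_j_g].
    by exists set0; rewrite cards0 unseparated0 subn0 mulnAC.
  have [S [leSj invS]] := IHj (ltnW lt_j_g).
  have [t step] := greedy_step S PD.
  have leRP : #|unseparated P S| <= #|P| by apply/subset_leq_card/unseparated_sub.
  exists (S :|: [set t]); split.
    by rewrite (leq_trans (leq_card_setU _ _)) // cards1 addn1.
  move: invS step leRP; rewrite unseparatedU.
  have : #|unseparated (unseparated P S) [set t]| <= #|unseparated P S|.
    exact/subset_leq_card/unseparated_sub.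
  move: #|unseparated _ [set t]| #|unseparated P S| #|P| => a r q.
  by case: (leqP q (2 * r)) => _; nia.
have [S [leSg half]] := invariant g (leqnn g).
exists S; split => //.
rewrite -(leq_pmul2l g_gt0) mulnA [g * 2]mulnC (leq_trans half) //.
by rewrite -[X in 2 * g - X]mul1n -mulnBl mul1n.
Qed.

Lemma separating_set m (P : {set I}) : P \subset D -> #|P| < 2 ^ m ->
  exists S : {set T}, #|S| <= g * m /\ unseparated P S = set0.
Proof.
elim: m P => [|m IHm] P PD ltP.
  exists set0; rewrite cards0; split => //.
  by apply/eqP; rewrite -cards_eq0 -leqn0 (leq_trans (subset_leq_card (unseparated_sub _ _))).
have [S0 [leS0 half]] := halving_set PD.
have RD : unseparated P S0 \subset D := subset_trans (unseparated_sub P S0) PD.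
have ltR : #|unseparated P S0| < 2 ^ m.
  by rewrite -(@ltn_pmul2l 2) // (leq_ltn_trans half) // -expnS.
have [S1 [leS1 sepS1]] := IHm _ RD ltR.
exists (S0 :|: S1); rewrite unseparatedU sepS1; split => //.
by rewrite mulnS (leq_trans (leq_card_setU _ _)) // leq_add.
Qed.

End SeparatingSets.

Section GraphDistance.
Variables (V : finType) (adj : rel V).

Lemma ball_step m u w v : w \in ball adj m u -> adj w v -> v \in ball adj m.+1 u.
Proof. by move=> Bw wv; rewrite /= !inE; apply/orP; right; apply/exists_inP; exists w. Qed.

Lemma ball_sub m n u : m <= n -> ball adj m u \subset ball adj n u.
Proof.
move/subnKC <-; elim: (n - m) => [|d IHd]; first by rewrite addn0.
by rewrite addnS (subset_trans IHd) //= subsetUl.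
Qed.

Lemma ball_trans m n u v w :
  v \in ball adj m u -> w \in ball adj n v -> w \in ball adj (m + n) u.
Proof.
move=> Bv; elim: n w => [|n IHn] w; first by rewrite addn0 inE => /eqP ->.
rewrite addnS => /setUP [/IHn Bw | ]; first exact: subsetP (ball_sub u (leqnSn _)) _ Bw.
by rewrite inE => /exists_inP [w' /IHn Bw' w'w]; apply: ball_step Bw' w'w.
Qed.

Lemma mem_ball1 u v : (v \in ball adj 1 u) = (v == u) || adj u v.
Proof.
rewrite /= !inE; congr (_ || _).
by apply/exists_inP/idP => [[w /set1P ->] | uv] //; exists u; rewrite ?inE.
Qed.

Lemma mem_ball_gdist m u v : m < #|V| -> (v \in ball adj m u) = (gdist adj u v <= m).
Proof.
move=> ltmV; apply/idP/idP => [Bv | le_dm].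
  rewrite leqNgt; apply/negP => /(before_find 0).
  by rewrite nth_iota // add0n Bv.
have has_v : has (fun j => v \in ball adj j u) (iota 0 #|V|).
  by rewrite has_find size_iota (leq_ltn_trans le_dm).
apply: (subsetP (ball_sub u le_dm)).
by have := nth_find 0 has_v; rewrite nth_iota ?add0n // (leq_ltn_trans le_dm).
Qed.

Lemma gdist_eq0 u v : (gdist adj u v == 0) = (v == u).
Proof.
have V_gt0 : 0 < #|V| by apply/card_gt0P; exists u.
by rewrite -leqn0 -mem_ball_gdist // inE.
Qed.

Lemma gdistxx u : gdist adj u u = 0.
Proof. by apply/eqP; rewrite gdist_eq0. Qed.

Lemma gdist_eq1 u v : 1 < #|V| -> (gdist adj u v == 1) = (v != u) && adj u v.
Proof.
move=> V_gt1; rewrite eqn_leq -mem_ball_gdist // mem_ball1 lt0n gdist_eq0.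
by case: (v == u); rewrite ?andbT.
Qed.

Section Bipartite.
Variable side : V -> bool.
Hypothesis adj_side : forall u v, adj u v -> side v = ~~ side u.

Lemma side_ball m u v : v \in ball adj m u ->
  (forall j, j < m -> v \notin ball adj j u) -> side v = side u (+) odd m.
Proof.
elim: m v => [|m IHm] v; first by rewrite inE => /eqP -> _; rewrite addbF.
move=> /setUP [Bv | Bv] far; first by case/negP: (far m (ltnSn m)).
move: Bv; rewrite inE => /exists_inP [w Bw wv].
have far_w j : j < m -> w \notin ball adj j u.
  by move=> ltjm; apply: contra (far j.+1 ltjm) => Bwj; apply: ball_step Bwj wv.
by rewrite (adj_side wv) (IHm w Bw far_w) addbN.
Qed.

Lemma odd_gdist m u v : v \in ball adj m u -> m < #|V| ->
  odd (gdist adj u v) = (side u != side v).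
Proof.
move=> Bv ltmV; have le_dm : gdist adj u v <= m by rewrite -mem_ball_gdist.
have ltdV := leq_ltn_trans le_dm ltmV.
rewrite (@side_ball (gdist adj u v) u v) ?mem_ball_gdist //.
  by case: (side u); case: odd.
by move=> j ltj; rewrite mem_ball_gdist -?ltnNge // (ltn_trans ltj).
Qed.

End Bipartite.

Lemma resolvingP S : reflect (resolving adj S) (resolvingb adj S).
Proof.
apply: (iffP forallP) => [res u w uw | res u].
  by have /forallP/(_ w)/implyP/(_ uw)/exists_inP := res u.
by apply/forallP => w; apply/implyP => /res [s Ss ds]; apply/exists_inP; exists s.
Qed.

Lemma resolving_setT : resolving adj [set: V].
Proof. by move=> u w uw; exists w; rewrite ?inE // gdistxx gdist_eq0 eq_sym. Qed.

Lemma metric_dim_le S : resolving adj S -> metric_dim V adj <= #|S|.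
Proof.
move=> res; rewrite /metric_dim; case: arg_minnP => [|S0 _ min_S0].
  exact/resolvingP/resolving_setT.
exact/min_S0/resolvingP.
Qed.

End GraphDistance.

Section IncidenceGraph.
Variables (X Bk : finType) (inc : X -> Bk -> bool).
Local Notation adj := (incidence_adj X Bk inc).

Lemma incidence_resolving m (x0 : X) (SX : {set X}) (SB : {set Bk}) :
  (forall u v, v \in ball adj m u) -> m < #|{: X + Bk}| ->
  (forall x y, x != y -> exists2 b, b \in SB & inc x b != inc y b) ->
  (forall b b', b != b' -> exists2 x, x \in SX & inc x b != inc x b') ->
  resolving adj (inl x0 |: (inl @: SX :|: inr @: SB)).
Proof.
move=> connected ltmV sepX sepB u w uw.
have V_gt1 : 1 < #|{: X + Bk}| by apply/card_gt1P; exists u, w.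
pose side (v : X + Bk) := if v is inr _ then true else false.
have adj_side v v' : adj v v' -> side v' = ~~ side v by case: v v' => [?|?] [?|?].
have parity v : odd (gdist adj v (inl x0)) = side v.
  by rewrite (odd_gdist adj_side (connected _ _) ltmV); case: v.
have dist1 v v' : v' != v -> (gdist adj v v' == 1) = adj v v'.
  by move=> v'v; rewrite gdist_eq1 // v'v.
case: u w uw => [x|b] [y|b'] uw.
- have [b SBb sep] : exists2 b, b \in SB & inc x b != inc y b.
    by apply: sepX; apply: contra_neq uw => ->.
  exists (inr b); first by rewrite in_setU1 in_setU imset_f ?orbT.
  apply: contra_neq sep => dist_eq.
  rewrite -[inc x b](dist1 (inl x) (inr b)) //.
  by rewrite -[inc y b](dist1 (inl y) (inr b)) // dist_eq.
- exists (inl x0); first exact: setU11.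
  by apply/eqP => dist_eq; have := parity (inr b'); rewrite -dist_eq parity.
- exists (inl x0); first exact: setU11.
  by apply/eqP => dist_eq; have := parity (inr b); rewrite dist_eq parity.
- have [x SXx sep] : exists2 x, x \in SX & inc x b != inc x b'.
    by apply: sepB; apply: contra_neq uw => ->.
  exists (inl x); first by rewrite in_setU1 in_setU imset_f ?orbT.
  apply: contra_neq sep => dist_eq.
  rewrite -[inc x b](dist1 (inr b) (inl x)) //.
  by rewrite -[inc x b'](dist1 (inr b') (inl x)) // dist_eq.
Qed.

End IncidenceGraph.

Lemma card_symdiff (T : finType) (P Q : pred T) :
  #|[set t | P t]| + #|[set t | Q t]| = #|[set t | P t != Q t]| + 2 * #|[set t | P t && Q t]|.
Proof.
have indicator (R : pred T) : #|[set t | R t]| = \sum_t (R t : nat).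
  by rewrite -sum1dep_card big_mkcond /=; apply: eq_bigr => t _; case: (R t).
rewrite !indicator big_distrr -!big_split /=.
by apply: eq_bigr => t _; case: (P t); case: (Q t).
Qed.

Lemma exists_neq_ord k (i : 'I_k) : 1 < k -> exists j : 'I_k, j != i.
Proof.
move=> k_gt1; have [-> | neq_i0] := eqVneq i (Ordinal (ltnW k_gt1)).
  by exists (Ordinal k_gt1); apply/eqP => /(congr1 val).
by exists (Ordinal (ltnW k_gt1)); rewrite eq_sym.
Qed.

Section TransversalDesign.
Variables (X Bk : finType) (inc : X -> Bk -> bool) (lam k g : nat) (pc : X -> 'I_k).
Hypothesis td : is_TD X Bk inc lam k g pc.

Lemma td_card_points : #|X| = k * g.
Proof.
case: td => _ class_size _ _; rewrite -cardsT (@card_fibers _ _ pc _ g) // => i.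
by rewrite -(class_size i); apply: eq_card => x; rewrite !inE andbT.
Qed.

Lemma td_block_size b : #|[set x | inc x b]| = k.
Proof.
case: td => _ _ block_meets _.
by rewrite (@card_fibers _ _ pc _ 1) ?muln1 // => i; apply: block_meets.
Qed.

Lemma td_class_point (i : 'I_k) : exists x, pc x == i.
Proof.
case: td => g_ge2 class_size _ _.
have /card_gt0P [x] : 0 < #|[set x | pc x == i]| by rewrite class_size (ltnW g_ge2).
by rewrite inE; exists x.
Qed.

Lemma td_point_in_class b (i : 'I_k) : exists x, (pc x == i) && inc x b.
Proof.
case: td => _ _ block_meets _.
have /card_gt0P [x] : 0 < #|[set x | (pc x == i) && inc x b]| by rewrite block_meets.
by rewrite inE; exists x.
Qed.

Lemma td_class_unique b x y : pc x = pc y -> inc x b -> inc y b -> x = y.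
Proof.
case: td => _ _ block_meets _ same xb yb.
have /cards1P [z line] := introT eqP (block_meets b (pc x)).
have mem v : pc v = pc x -> inc v b -> v = z.
  by move=> pv vb; apply/set1P; rewrite -line inE pv eqxx.
by rewrite (mem x) // (mem y).
Qed.

Lemma td_common_block x y : 0 < lam -> pc x != pc y -> exists b, inc x b && inc y b.
Proof.
case: td => _ _ _ pair_blocks lam_gt0 /pair_blocks.
by move/(congr1 (leq 1)); rewrite lam_gt0 => /card_gt0P [b]; rewrite inE; exists b.
Qed.

Lemma td_replication x (i : 'I_k) : pc x != i -> #|[set b | inc x b]| = lam * g.
Proof.
case: td => _ class_size block_meets pair_blocks xi.
have := double_count [set z | pc z == i] [set: Bk] (fun z b => inc x b && inc z b).
rewrite (eq_bigr (fun _ => lam)); last first.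
  move=> z; rewrite inE => /eqP zi; rewrite -(pair_blocks x z) ?zi //.
  by apply: eq_card => b; rewrite !inE.
rewrite sum_nat_const class_size mulnC => ->.
rewrite -sum1dep_card big_mkcond /=.
rewrite (eq_bigl (fun b => b \in [set: Bk])) => [|b]; last by rewrite inE.
apply: eq_bigr => b _; case: (inc x b).
  by rewrite -(block_meets b i); apply: eq_card => z; rewrite !inE.
by apply/esym/eqP; rewrite cards_eq0; apply/eqP/setP => z; rewrite !inE /= andbF.
Qed.

End TransversalDesign.

Lemma std_dual X Bk inc lam k g pc bc : is_STD X Bk inc lam k g pc bc ->
  is_STD Bk X (fun b x => inc x b) lam k g bc pc.
Proof. by case. Qed.

Section SymmetricTransversalDesign.
Variables (X Bk : finType) (inc : X -> Bk -> bool) (lam k g : nat).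
Variables (pc : X -> 'I_k) (bc : Bk -> 'I_k).
Hypothesis std : is_STD X Bk inc lam k g pc bc.
Local Notation adj := (incidence_adj X Bk inc).

Let td : is_TD X Bk inc lam k g pc := std.1.
Let td_dual : is_TD Bk X (fun b x => inc x b) lam k g bc := std.2.

Lemma std_degree x : #|[set b | inc x b]| = k.
Proof. exact: td_block_size td_dual x. Qed.

Lemma std_k_eq : 1 < k -> k = lam * g.
Proof.
move=> k_gt1; have [x _] := td_class_point td (Ordinal k_gt1).
have [i neq_i] := exists_neq_ord (pc x) k_gt1.
by rewrite -(std_degree x) (td_replication td (i := i)) // eq_sym.
Qed.

Lemma std_separating_blocks x y : x != y -> k <= #|[set b | inc x b != inc y b]|.
Proof.
move=> xy; have := card_symdiff (inc x) (inc y); rewrite !std_degree.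
have [same | diff] := eqVneq (pc x) (pc y).
  have -> : #|[set b | inc x b && inc y b]| = 0.
    apply/eqP; rewrite cards_eq0; apply/eqP/setP => b; rewrite !inE.
    apply/negP => /andP [xb yb]; case/negP: xy; apply/eqP.
    exact: (td_class_unique td same xb yb).
  by move=> sum; lia.
have k_gt1 : 1 < k.
  by move: diff (ltn_ord (pc x)) (ltn_ord (pc y)); rewrite -val_eqE /=; lia.
case: td => g_ge2 _ _ pair_blocks; rewrite pair_blocks // (std_k_eq k_gt1).
by move=> sum; nia.
Qed.

Lemma std_ball_point : 0 < lam -> 1 < k -> forall x v, v \in ball adj 4 (inl x).
Proof.
move=> lam_gt0 k_gt1 x.
have near y : pc x != pc y -> inl y \in ball adj 2 (inl x).
  move=> xy; have [b /andP [xb yb]] := td_common_block td lam_gt0 xy.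
  apply: (@ball_step _ _ 1 _ (inr b)) => //.
  by apply: (@ball_step _ _ 0 _ (inl x)); rewrite ?inE.
have [i neq_i] := exists_neq_ord (pc x) k_gt1.
have blocks b : inr b \in ball adj 3 (inl x).
  have [z /andP [/eqP zi zb]] := td_point_in_class td b i.
  by apply: (@ball_step _ _ 2 _ (inl z)) => //; apply: near; rewrite zi eq_sym.
case=> [y | b]; last exact: subsetP (ball_sub _ _ (leqnSn 3)) _ (blocks b).
have [b /andP [_ yb]] := td_point_in_class td_dual y (pc y).
by apply: ball_step (blocks b) _.
Qed.

Lemma std_ball : 0 < lam -> 1 < k -> forall u v, v \in ball adj 5 u.
Proof.
move=> lam_gt0 k_gt1 [x | b] v.
  exact: subsetP (ball_sub _ _ (leqnSn 4)) _ (std_ball_point lam_gt0 k_gt1 x v).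
have [x /andP [_ xb]] := td_point_in_class td b (Ordinal k_gt1).
have near_x : inl x \in ball adj 1 (inr b) by rewrite mem_ball1 /= xb.
exact: ball_trans near_x (std_ball_point lam_gt0 k_gt1 x v).
Qed.

Lemma std_separating_set M : 1 < k -> (lam * g ^ 2) ^ 2 < 2 ^ M ->
  exists SB : {set Bk}, #|SB| <= g * M /\
    forall x y, x != y -> exists2 b, b \in SB & inc x b != inc y b.
Proof.
move=> k_gt1 ltM; have [g_ge2 _ _ _] := td.
have cardX : #|X| = lam * g ^ 2 by rewrite (td_card_points td) (std_k_eq k_gt1) -mulnA mulnn.
have cardB : #|Bk| = k * g := td_card_points td_dual.
pose D := [set p : X * X | p.1 != p.2].
have dense : {in D, forall p, #|Bk| <= g * #|[set b | inc p.1 b != inc p.2 b]|}.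
  move=> [x y]; rewrite inE /= => xy.
  by rewrite cardB mulnC leq_mul2l std_separating_blocks ?orbT.
have ltD : #|D| < 2 ^ M.
  by rewrite (leq_ltn_trans (max_card _)) // card_prod cardX.
have Bk_gt0 : 0 < #|Bk| by rewrite cardB muln_gt0 (ltnW k_gt1) (ltnW g_ge2).
have [S [leS sepS]] := separating_set Bk_gt0 (ltnW g_ge2) dense (subxx D) ltD.
exists S; split => // x y xy.
have Dxy : (x, y) \in D by rewrite inE.
have : (x, y) \notin unseparated (fun b p => inc p.1 b != inc p.2 b) D S by rewrite sepS inE.
by case/(unseparatedPn Dxy) => b Sb; exists b.
Qed.

End SymmetricTransversalDesign.

Lemma std_metric_dim_le X Bk inc lam k g pc bc M :
  is_STD X Bk inc lam k g pc bc -> 0 < lam -> (lam * g ^ 2) ^ 2 < 2 ^ M ->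
  metric_dim _ (incidence_adj X Bk inc) <= 2 * g * M + 1.
Proof.
move=> std lam_gt0 ltM; have [td td_dual] := std; have [g_ge2 _ _ _] := td.
have cardV : #|{: X + Bk}| = 2 * (k * g).
  by rewrite card_sum (td_card_points td) (td_card_points td_dual) addnn -mul2n.
have [k_le1 | k_gt1] := leqP k 1.
  have M_gt0 : 0 < M.
    rewrite lt0n; apply: contraTneq ltM => ->.
    by rewrite -leqNgt expn0 expn_gt0 muln_gt0 lam_gt0 expn_gt0 (ltnW g_ge2).
  by rewrite (leq_trans (metric_dim_le (resolving_setT _))) // cardsT cardV; nia.
have [SB [leSB sepSB]] := std_separating_set std k_gt1 ltM.
have [SX [leSX sepSX]] := std_separating_set (std_dual std) k_gt1 ltM.
have [x0 _] := td_class_point td (Ordinal k_gt1).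
have lt5V : 5 < #|{: X + Bk}| by rewrite cardV; nia.
have resS := incidence_resolving x0 (std_ball std lam_gt0 k_gt1) lt5V sepSB sepSX.
rewrite (leq_trans (metric_dim_le resS)) // cardsU1 addnC leq_add ?leq_b1 //.
rewrite (leq_trans (leq_card_setU _ _)) // -mulnA mul2n -addnn.
by rewrite leq_add // (leq_trans (leq_imset_card _ _)).
Qed.

Lemma natpowE m n : Nat.pow m n = m ^ n.
Proof. by elim: n => // n IHn; rewrite expnS -IHn. Qed.

(* Back to [Nat.pow] for [^] on [nat], as in the statement of the theorem. *)
Import PeanoNat.

Lemma ln_le x y : (0 < x -> x <= y -> ln x <= ln y)%R.
Proof.
move=> x_gt0 /Rle_lt_or_eq_dec [/(ln_increasing _ _ x_gt0) /Rlt_le // | ->].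
exact: Rle_refl.
Qed.

Lemma sqrt_ln_bound (g t n : nat) : (g ^ 2 <= n)%N -> (2 ^ t <= n)%N -> (8 <= n)%N ->
  (INR (2 * g * (2 * t.+1) + 1) <= 20 * sqrt (INR n) * ln (INR n))%R.
Proof.
move=> /leP/le_INR g2n /leP/le_INR tn /leP/le_INR n_ge8.
have INR2 : INR 2 = 2%R by rewrite /=; lra.
rewrite pow_INR in g2n; rewrite pow_INR INR2 in tn; rewrite [INR 8]/= in n_ge8.
have g_le : (INR g <= sqrt (INR n))%R.
  by rewrite -(sqrt_pow2 (INR g)); [apply: sqrt_le_1_alt | apply: pos_INR].
have t_le : (INR t * ln 2 <= ln (INR n))%R.
  by rewrite -ln_pow; [apply: ln_le => //; apply: pow_lt | ]; lra.
have ln_ge : (INR 3 * ln 2 <= ln (INR n))%R.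
  by rewrite -ln_pow; [apply: ln_le; rewrite /=; lra | lra].
have sqrt_ge1 : (1 <= sqrt (INR n))%R by rewrite -sqrt_1; apply: sqrt_le_1_alt; lra.
have ln2 := ln_lt_2; have g_ge0 := pos_INR g; have t_ge0 := pos_INR t.
rewrite /= in ln_ge.
have t_le2 : (INR t <= 2 * ln (INR n))%R by nra.
have gt_le : (INR g * INR t <= sqrt (INR n) * (2 * ln (INR n)))%R.
  by apply: Rmult_le_compat.
rewrite -plusE -!multE plus_INR !mult_INR INR2 S_INR INR_1.
nra.
Qed.

Theorem corollary3p5 :
  exists C : R,
    forall (lam k g : nat) (X Bk : finType) (inc : X -> Bk -> bool)
           (pc : X -> 'I_k) (bc : Bk -> 'I_k),
      (1 <= lam)%N -> (2 <= g)%N ->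
      is_STD X Bk inc lam k g pc bc ->
      let n := (2 * lam * g ^ 2)%N in
      (INR (metric_dim (X + Bk)%type (incidence_adj X Bk inc)) <= C * sqrt (INR n) * ln (INR n))%R.
Proof.
exists 20%R => lam k g X Bk inc pc bc lam_gt0 g_ge2 std n.
have n_eq : n = 2 * lam * (g * g) by rewrite /n natpowE mulnn.
have n_gt0 : 0 < n by rewrite n_eq; nia.
apply: Rle_trans (sqrt_ln_bound (g := g) (t := trunc_log 2 n) _ _ _); last 3 first.
- by rewrite natpowE -mulnn n_eq; nia.
- by rewrite natpowE; apply: trunc_logP.
- by rewrite n_eq; nia.
apply/le_INR/leP/(std_metric_dim_le std lam_gt0).
rewrite [2 * _]mulnC expnM ltn_sqr (leq_ltn_trans _ (trunc_log_ltn n (leqnn 2))) //.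
by rewrite n_eq -mulnn; nia.
Qed.
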